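(* Let $A \in M_n(\mathbb{C})$. Then strong continuity of $f_A^{-1}$ fails at every point $z\in\partial F(A)$ that is an isolated, fully round, multiply generated boundary point.
   Context: For $A\in M_n(\mathbb{C})$, $f_A(x)=x^*Ax$ is defined on the unit sphere $\mathbb{C}S^n$ of $\mathbb{C}^n$ and $F(A)=f_A(\mathbb{C}S^n)$ is the numerical range. The multivalued inverse $f_A^{-1}$ is strongly continuous at $z\in F(A)$ if for every $x\in f_A^{-1}(z)$ and every neighborhood $V$ of $x$ in $\mathbb{C}S^n$, $f_A(V)$ contains a neighborhood of $z$ relative to $F(A)$. A point $z\in\partial F(A)$ is fully round if neither of its one-sided neighborhoods in $\partial F(A)$ is a line segment, for every sufficiently small size. A boundary point $z$ is multiply generated if $f_A^{-1}(z)$ is not contained in a one-dimensional subspace of $\mathbb{C}^n$; it is an isolated multiply generated boundary point if some neighborhood of $z$ contains no other multiply generated boundary points. *)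

From HB Require Import structures.
From mathcomp Require Import all_boot all_order all_algebra.
From mathcomp Require Import complex.
From mathcomp Require Import reals.
Set Implicit Arguments. Unset Strict Implicit. Unset Printing Implicit Defensive.
Import Order.TTheory GRing.Theory Num.Theory.
Local Open Scope ring_scope.
Local Open Scope complex_scope.

Section NumRange.
Variables (R : realType) (n : nat) (A : 'M[R[i]]_n).
Local Notation C := R[i].

Definition cadj (x : 'cV[C]_n) : 'rV[C]_n := \row_j conjc (x j 0).

Definition fA (x : 'cV[C]_n) : C := (cadj x *m A *m x) 0 0.

Definition vnorm2 (x : 'cV[C]_n) : C := \sum_i `|x i 0| ^+ 2.

Definition unit_sphere (x : 'cV[C]_n) : Prop := vnorm2 x = 1.

Definition numrange (z : C) : Prop := exists2 x, unit_sphere x & fA x = z.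

Definition nr_boundary (z : C) : Prop :=
  forall e : R, 0 < e ->
    (exists2 w, numrange w & `|w - z| < e%:C) /\
    (exists2 w, ~ numrange w & `|w - z| < e%:C).

Definition segment (z w : C) (u : C) : Prop :=
  exists2 t : R, 0 <= t <= 1 & u = (1 - t)%:C * z + t%:C * w.

(* z is fully round: no one-sided neighborhood of z in the boundary is a
   line segment (i.e. no nondegenerate segment [z,w] lies in the boundary),
   and the one-sided neighborhoods are not the degenerate segment {z}. *)
Definition fully_round (z : C) : Prop :=
  nr_boundary z /\
  (forall w, w != z -> ~ (forall u, segment z w u -> nr_boundary u)) /\
  (exists2 w, nr_boundary w & w != z).

Definition multiply_generated (z : C) : Prop :=
  ~ exists2 v : 'cV[C]_n, v != 0 &
      forall x, unit_sphere x -> fA x = z -> exists c : C, x = c *: v.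

Definition isolated_mg (z : C) : Prop :=
  nr_boundary z /\ multiply_generated z /\
  exists2 e : R, 0 < e & forall w, nr_boundary w -> w != z ->
      `|w - z| < e%:C -> ~ multiply_generated w.

(* strong continuity of the multivalued inverse f_A^{-1} at z:
   for every x in f_A^{-1}(z) and every neighborhood V of x in CS^n,
   f_A(V) contains a neighborhood of z relative to F(A). *)
Definition strongly_continuous_at (z : C) : Prop :=
  forall x, unit_sphere x -> fA x = z ->
  forall eps : R, 0 < eps -> exists2 delta : R, 0 < delta &
    forall w, numrange w -> `|w - z| < delta%:C ->
      exists2 y, unit_sphere y /\ vnorm2 (y - x) < eps%:C & fA y = w.

End NumRange.

From mathcomp Require Import all_boot all_order all_algebra.
From mathcomp Require Import complex.
From mathcomp Require Import reals.
From mathcomp Require Import classical_sets boolp topology normedtype derive.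
From mathcomp Require Import ring lra.
Import Order.TTheory GRing.Theory Num.Theory.
Import numFieldTopology.Exports numFieldNormedType.Exports.
Local Open Scope ring_scope.
Set Implicit Arguments. Unset Strict Implicit.

(* Take non-collinear unit vectors x1, x2 with f_A(x1) = f_A(x2) = z.  Boundary
   points w <> z of F(A) cluster at z: perturbing x1 towards a preimage of a
   second boundary point yields points of F(A) \ {z} near z, and the last point
   of F(A) on an arc from such a point to a nearby point outside F(A) lies on
   the boundary.  Near z these w are not multiply generated, so any two unit
   preimages of w differ by a unimodular factor g.  Strong continuity would give
   preimages y1 ~ x1 and y2 = g y1 ~ x2, hence x2 ~ g x1, contradicting the
   positive distance from x2 to the line through x1. *)

Section SquaredModulus.
Variable R : realType.
Local Open Scope complex_scope.
Implicit Types u v : R[i].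

Definition sqrmod u : R := complex.Re u ^+ 2 + complex.Im u ^+ 2.

Lemma sqrmod_ge0 u : 0 <= sqrmod u.
Proof. by rewrite addr_ge0 // sqr_ge0. Qed.

Lemma sqrmodM u v : sqrmod (u * v) = sqrmod u * sqrmod v.
Proof. by case: u v => [a b] [c d]; rewrite /sqrmod /=; ring. Qed.

Lemma sqrmodN u : sqrmod (- u) = sqrmod u.
Proof. by case: u => a b; rewrite /sqrmod /=; ring. Qed.

Lemma sqrmod_real (t : R) : sqrmod t%:C = t ^+ 2.
Proof. by rewrite /sqrmod /=; ring. Qed.

Lemma conj_real_complex (t : R) : Num.conj t%:C = t%:C.
Proof. exact: conjc_real. Qed.

Lemma sqrmod0 : sqrmod 0 = 0.
Proof. by rewrite sqrmod_real expr0n. Qed.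

Lemma sqrmodD_le u v : sqrmod (u + v) <= 2 * sqrmod u + 2 * sqrmod v.
Proof.
case: u v => [a b] [c d]; rewrite /sqrmod /= -subr_ge0.
have -> : 2 * (a ^+ 2 + b ^+ 2) + 2 * (c ^+ 2 + d ^+ 2) -
   ((a + c) ^+ 2 + (b + d) ^+ 2) = (a - c) ^+ 2 + (b - d) ^+ 2 by ring.
by rewrite addr_ge0 // sqr_ge0.
Qed.

Lemma sqrmod_eq0 u : sqrmod u = 0 -> u = 0.
Proof.
case: u => a b; rewrite /sqrmod /= => /eqP; rewrite paddr_eq0 ?sqr_ge0 //.
by rewrite !sqrf_eq0 => /andP[/eqP-> /eqP->].
Qed.

Lemma sqrmodE u : (sqrmod u)%:C = `|u| ^+ 2.
Proof. exact: add_Re2_Im2. Qed.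

Lemma normc_ltR u (e : R) : 0 < e -> (`|u| < e%:C) = (sqrmod u < e ^+ 2).
Proof.
move=> e0; rewrite normc_def ltcR /sqrmod.
by rewrite -{1}(gtr0_norm e0) -sqrtr_sqr ltr_sqrt ?exprn_gt0.
Qed.

End SquaredModulus.

Section Vectors.
Variables (R : realType) (n : nat) (A : 'M[R[i]]_n).
Local Notation C := R[i].
Local Open Scope complex_scope.
Implicit Types x y : 'cV[C]_n.

Definition vsqnorm x : R := \sum_i sqrmod (x i 0).

Lemma vnorm2E x : vnorm2 x = (vsqnorm x)%:C.
Proof. by rewrite /vnorm2 rmorph_sum; apply: eq_bigr => i _; rewrite -sqrmodE. Qed.

Lemma unit_sphereE x : unit_sphere x <-> vsqnorm x = 1.
Proof. by rewrite /unit_sphere vnorm2E; split => [[]|->]. Qed.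

Lemma vsqnorm_ge0 x : 0 <= vsqnorm x.
Proof. by apply: sumr_ge0 => i _; apply: sqrmod_ge0. Qed.

Lemma vsqnormN x : vsqnorm (- x) = vsqnorm x.
Proof. by apply: eq_bigr => i _; rewrite mxE sqrmodN. Qed.

Lemma vsqnormZ (c : C) x : vsqnorm (c *: x) = sqrmod c * vsqnorm x.
Proof. by rewrite /vsqnorm mulr_sumr; apply: eq_bigr => i _; rewrite mxE sqrmodM. Qed.

Lemma vsqnorm0 : vsqnorm 0 = 0.
Proof. by rewrite -(scale0r (0 : 'cV[C]_n)) vsqnormZ sqrmod0 mul0r. Qed.

Lemma unit_sphere_neq0 x : unit_sphere x -> x != 0.
Proof.
move=> /unit_sphereE x1; apply: contraPneq x1 => ->.
by rewrite vsqnorm0 => /eqP; rewrite eq_sym oner_eq0.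
Qed.

Lemma vsqnormD_le x y : vsqnorm (x + y) <= 2 * vsqnorm x + 2 * vsqnorm y.
Proof.
rewrite /vsqnorm !mulr_sumr -big_split /=; apply: ler_sum => i _.
by rewrite mxE sqrmodD_le.
Qed.

Lemma vsqnorm_eq0 x : vsqnorm x = 0 -> x = 0.
Proof.
move=> /eqP; rewrite psumr_eq0 => [/allP x0|i _]; last exact: sqrmod_ge0.
apply/matrixP => i j; rewrite (ord1 j) mxE; apply: sqrmod_eq0.
by apply/eqP/x0; rewrite mem_index_enum.
Qed.

Lemma cadjD x y : cadj (x + y) = cadj x + cadj y.
Proof. by apply/matrixP => i j; rewrite !mxE rmorphD. Qed.

Lemma cadjZ (c : C) x : cadj (c *: x) = c^* *: cadj x.
Proof. by apply/matrixP => i j; rewrite !mxE rmorphM. Qed.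

Definition cdot x y : C := (cadj x *m y) 0 0.

Definition sesq x y : C := (cadj x *m A *m y) 0 0.

Lemma fA_sesq x : fA A x = sesq x x. Proof. by []. Qed.

Lemma cdotDl x y w : cdot (x + y) w = cdot x w + cdot y w.
Proof. by rewrite /cdot cadjD mulmxDl mxE. Qed.

Lemma cdotDr x y w : cdot w (x + y) = cdot w x + cdot w y.
Proof. by rewrite /cdot mulmxDr mxE. Qed.

Lemma cdotZl (c : C) x y : cdot (c *: x) y = c^* * cdot x y.
Proof. by rewrite /cdot cadjZ -scalemxAl mxE. Qed.

Lemma cdotZr (c : C) x y : cdot x (c *: y) = c * cdot x y.
Proof. by rewrite /cdot -scalemxAr mxE. Qed.

Lemma cdotNr x y : cdot x (- y) = - cdot x y.
Proof. by rewrite -scaleN1r cdotZr mulN1r. Qed.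

Lemma sesqDl x y w : sesq (x + y) w = sesq x w + sesq y w.
Proof. by rewrite /sesq cadjD !mulmxDl mxE. Qed.

Lemma sesqDr x y w : sesq w (x + y) = sesq w x + sesq w y.
Proof. by rewrite /sesq mulmxDr mxE. Qed.

Lemma sesqZl (c : C) x y : sesq (c *: x) y = c^* * sesq x y.
Proof. by rewrite /sesq cadjZ -!scalemxAl mxE. Qed.

Lemma sesqZr (c : C) x y : sesq x (c *: y) = c * sesq x y.
Proof. by rewrite /sesq -scalemxAr mxE. Qed.

Lemma cdotE x y : cdot x y = \sum_j (x j 0)^* * y j 0.
Proof. by rewrite /cdot mxE; apply: eq_bigr => j _; rewrite mxE. Qed.

Lemma cdotC x y : cdot y x = (cdot x y)^*.
Proof.
rewrite !cdotE rmorph_sum; apply: eq_bigr => j _.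
by rewrite rmorphM /= conjcK mulrC.
Qed.

Lemma vnorm2_cdot x : vnorm2 x = cdot x x.
Proof. by rewrite cdotE; apply: eq_bigr => j _; rewrite sqr_normc mulrC. Qed.

Lemma cdot_unit x : unit_sphere x -> cdot x x = 1.
Proof. by rewrite -vnorm2_cdot. Qed.

Lemma fAE x : fA A x = \sum_j \sum_k (x j 0)^* * A j k * x k 0.
Proof.
rewrite /fA mxE exchange_big /=; apply: eq_bigr => k _.
by rewrite mxE mulr_suml; apply: eq_bigr => j _; rewrite mxE.
Qed.

(* Pythagoras: [x2 - g x1] splits orthogonally into the residual [r] of [x2] and a multiple of [x1]. *)
Lemma sqdist_line_gt0 x1 x2 : unit_sphere x1 -> (forall c : C, x2 != c *: x1) ->
  exists2 D : R, 0 < D & forall g : C, D <= vsqnorm (x2 - g *: x1).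
Proof.
move=> u1 ncol; pose r := x2 - cdot x1 x2 *: x1.
have r0 : r != 0 by rewrite subr_eq0.
exists (vsqnorm r).
  rewrite lt_neqAle vsqnorm_ge0 andbT eq_sym.
  by apply: contra r0 => /eqP /vsqnorm_eq0 ->.
move=> g; have -> : x2 - g *: x1 = r + (cdot x1 x2 - g) *: x1.
  by rewrite /r scalerBl addrA subrK.
have r1 : cdot x1 r = 0 by rewrite /r cdotDr cdotNr cdotZr cdot_unit // mulr1 subrr.
have r1' : cdot r x1 = 0 by rewrite cdotC r1 conjc0.
move: (cdot x1 x2 - g) => c; clearbody r.
have : vnorm2 (r + c *: x1) = vnorm2 r + (sqrmod c)%:C.
  rewrite !vnorm2_cdot cdotDl !cdotDr !cdotZl !cdotZr r1 r1' (cdot_unit u1).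
  by rewrite sqrmodE sqr_normc !mulr0 !addr0 add0r mulr1 mulrC.
rewrite !vnorm2E -rmorphD => /complexI ->.
by rewrite lerDl sqrmod_ge0.
Qed.

End Vectors.

Lemma continuous_sum (R : realType) (T : topologicalType) (I : Type) (r : seq I)
    (P : pred I) (g : I -> T -> R) :
  (forall i, continuous (g i)) -> continuous (fun X => \sum_(i <- r | P i) g i X).
Proof.
move=> gc; elim: r => [|a r IH].
  by under eq_fun do rewrite big_nil; apply: cst_continuous.
under eq_fun do rewrite big_cons.
by case: (P a) => // X; apply: (continuousD (gc a X) (IH X)).
Qed.

Section Closedness.
Variables (R : realType) (n : nat) (A : 'M[R[i]]_n).
Local Notation C := R[i].
Local Open Scope complex_scope.
Local Notation V := 'rV[R]_(n + n).

Definition ccontinuous (g : V -> C) :=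
  continuous (fun X => complex.Re (g X)) /\ continuous (fun X => complex.Im (g X)).

Lemma ccontinuous_cst (c : C) : ccontinuous (fun _ => c).
Proof. by split; apply: cst_continuous. Qed.

Lemma ccontinuousD g h : ccontinuous g -> ccontinuous h -> ccontinuous (fun X => g X + h X).
Proof.
move=> [g1 g2] [h1 h2]; split => X.
- have -> : (fun Y => complex.Re (g Y + h Y)) =
      (fun Y => complex.Re (g Y) + complex.Re (h Y)).
    by apply: funext => Y; case: (g Y); case: (h Y).
  exact: (continuousD (g1 X) (h1 X)).
- have -> : (fun Y => complex.Im (g Y + h Y)) =
      (fun Y => complex.Im (g Y) + complex.Im (h Y)).
    by apply: funext => Y; case: (g Y); case: (h Y).
  exact: (continuousD (g2 X) (h2 X)).
Qed.

Lemma ccontinuousM g h : ccontinuous g -> ccontinuous h -> ccontinuous (fun X => g X * h X).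
Proof.
move=> [g1 g2] [h1 h2]; split => X.
- have -> : (fun Y => complex.Re (g Y * h Y)) = (fun Y =>
      complex.Re (g Y) * complex.Re (h Y) - complex.Im (g Y) * complex.Im (h Y)).
    by apply: funext => Y; case: (g Y); case: (h Y).
  exact: (continuousB (continuousM (g1 X) (h1 X)) (continuousM (g2 X) (h2 X))).
- have -> : (fun Y => complex.Im (g Y * h Y)) = (fun Y =>
      complex.Re (g Y) * complex.Im (h Y) + complex.Im (g Y) * complex.Re (h Y)).
    by apply: funext => Y; case: (g Y); case: (h Y).
  exact: (continuousD (continuousM (g1 X) (h2 X)) (continuousM (g2 X) (h1 X))).
Qed.

Lemma ccontinuousJ g : ccontinuous g -> ccontinuous (fun X => (g X)^*).
Proof.
move=> [g1 g2]; split => X.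
- have -> : (fun Y => complex.Re (g Y)^*) = (fun Y => complex.Re (g Y)).
    by apply: funext => Y; case: (g Y).
  exact: g1.
- have -> : (fun Y => complex.Im (g Y)^*) = (fun Y => - complex.Im (g Y)).
    by apply: funext => Y; case: (g Y).
  exact: (continuousN (g2 X)).
Qed.

Lemma ccontinuous_sum (I : Type) (r : seq I) (P : pred I) (g : I -> V -> C) :
  (forall i, ccontinuous (g i)) -> ccontinuous (fun X => \sum_(i <- r | P i) g i X).
Proof.
move=> gc; elim: r => [|a r IH].
  by under eq_fun do rewrite big_nil; apply: ccontinuous_cst.
under eq_fun do rewrite big_cons.
by case: (P a) => //; apply: ccontinuousD.
Qed.

Definition cvec_of_rV (X : V) : 'cV[C]_n :=
  \col_j (X 0 (lshift n j) +i* X 0 (rshift n j)).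

Definition rV_of_cvec (x : 'cV[C]_n) : V :=
  row_mx (\row_j complex.Re (x j 0)) (\row_j complex.Im (x j 0)).

Lemma rV_of_cvecK : cancel rV_of_cvec cvec_of_rV.
Proof.
move=> x; apply/matrixP => i j; rewrite (ord1 j) mxE row_mxEl row_mxEr !mxE.
by case: (x i 0).
Qed.

Lemma vsqnorm_cvec_of_rV X : vsqnorm (cvec_of_rV X) = \sum_(k < n + n) X 0 k ^+ 2.
Proof.
rewrite /vsqnorm big_split_ord /= -big_split /=; apply: eq_bigr => j _.
by rewrite mxE /sqrmod.
Qed.

Lemma ccontinuous_fA : ccontinuous (fun X => fA A (cvec_of_rV X)).
Proof.
have entry j : ccontinuous (fun X => cvec_of_rV X j 0).
  by under eq_fun do rewrite mxE; split; apply: coord_continuous.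
under eq_fun do rewrite fAE.
apply: ccontinuous_sum => j; apply: ccontinuous_sum => k.
by apply: ccontinuousM; [apply: ccontinuousM; [apply: ccontinuousJ|apply: ccontinuous_cst]|].
Qed.

Lemma compact_rV_sphere : compact [set X : V | \sum_(k < n + n) X 0 k ^+ 2 = 1]%classic.
Proof.
apply: (@subclosed_compact _ _ [set X : V | forall i, `[-1, 1]%classic (X 0 i)]%classic).
- apply: (@preimage_closed _ _ (fun X : V => \sum_(k < n + n) X 0 k ^+ 2) [set 1]%classic).
    move=> X _; apply: continuous_sum => k Y.
    exact: (continuousM (@coord_continuous _ _ _ 0 k Y) (@coord_continuous _ _ _ 0 k Y)).
  exact: closed_eq.
- exact: (@rV_compact R (n + n) (fun=> `[-1, 1]%classic) (fun=> @segment_compact R _ _)).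
- move=> X /= X1 i; rewrite /= in_itv /= -ler_norml -(@expr_le1 _ 2) // ?normr_ge0 //.
  rewrite real_normK ?num_real // -X1 (bigD1 i) //= lerDl.
  by apply: sumr_ge0 => k _; apply: sqr_ge0.
Qed.

(* The distance to [v] attains its infimum on the compact unit sphere. *)
Lemma numrange_closed (v : C) :
  (forall e : R, 0 < e -> exists2 w, numrange A w & sqrmod (w - v) < e) ->
  numrange A v.
Proof.
move=> adh; have [_ [x0 ux0 _] _] := adh 1 ltr01.
pose S := [set X : V | \sum_(k < n + n) X 0 k ^+ 2 = 1]%classic.
have inS x : unit_sphere x -> rV_of_cvec x \in S.
  by rewrite inE /S /= -vsqnorm_cvec_of_rV rV_of_cvecK => /unit_sphereE.
pose dist X := sqrmod (fA A (cvec_of_rV X) - v).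
have dist_cont : continuous dist.
  have [g1 g2] := ccontinuousD ccontinuous_fA (ccontinuous_cst (- v)).
  move=> X; rewrite /dist /sqrmod; under eq_fun do rewrite !expr2.
  exact: (continuousD (continuousM (g1 X) (g1 X)) (continuousM (g2 X) (g2 X))).
have [c /[!inE] cS cmin] := EVT_min_rV (ex_intro _ _ (set_mem (inS _ ux0)))
  compact_rV_sphere (continuous_subspaceT dist_cont).
have dist0 : dist c = 0.
  apply/eqP; rewrite eq_le sqrmod_ge0 andbT leNgt; apply/negP => /adh[_ [x ux <-]].
  by apply/negP; rewrite -leNgt -[X in sqrmod (fA A X - v)](rV_of_cvecK x) cmin ?inS.
exists (cvec_of_rV c); first by apply/unit_sphereE; rewrite vsqnorm_cvec_of_rV.
by apply/eqP; rewrite -subr_eq0; apply/eqP/sqrmod_eq0.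
Qed.

End Closedness.

Section Boundary.
Variables (R : realType) (n : nat) (A : 'M[R[i]]_n).
Local Notation C := R[i].
Local Open Scope complex_scope.

Lemma nr_boundaryE w : nr_boundary A w <-> forall e : R, 0 < e ->
  (exists2 u, numrange A u & sqrmod (u - w) < e) /\
  (exists2 u, ~ numrange A u & sqrmod (u - w) < e).
Proof.
split=> [bw e e0|bw e e0].
  have e1 : 0 < Num.sqrt e by rewrite sqrtr_gt0.
  have [[u1 h1 l1] [u2 h2 l2]] := bw _ e1.
  move: l1 l2; rewrite !normc_ltR // sqr_sqrtr ?ltW // => l1 l2.
  by split; [exists u1 | exists u2].
have [[u1 h1 l1] [u2 h2 l2]] := bw _ (exprn_gt0 2 e0).
by split; [exists u1 | exists u2]; rewrite // normc_ltR.
Qed.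

Lemma nr_boundary_numrange w : nr_boundary A w -> numrange A w.
Proof. by move=> /nr_boundaryE bw; apply: numrange_closed => e /bw[]. Qed.

(* Normalising [x1 + t x0] gives the value [z + t (d + t (w0 - z)) / |x1 + t x0|^2]. *)
Lemma numrange_perturb x1 x0 (z w0 : C) (t : R) :
  unit_sphere x1 -> fA A x1 = z -> unit_sphere x0 -> fA A x0 = w0 ->
  0 < t -> t <= 1/2 ->
  let d := sesq A x1 x0 + sesq A x0 x1 - z * (cdot x1 x0 + cdot x0 x1) in
  d + t%:C * (w0 - z) != 0 ->
  exists p, [/\ numrange A p, p != z &
     sqrmod (p - z) <= 8 * t * (2 * sqrmod d + 2 * sqrmod (w0 - z))].
Proof.
move=> u1 f1 u0 f0 t0 th d dnz.
pose u := x1 + t%:C *: x0; pose nu := vsqnorm u.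
have nu_ge : 1/4 <= nu.
  have := vsqnormD_le u (- (t%:C *: x0)).
  rewrite addrK vsqnormN vsqnormZ sqrmod_real.
  rewrite (unit_sphereE x1).1 // (unit_sphereE x0).1 // mulr1 -/nu.
  have : t ^+ 2 <= 1/4 by rewrite expr2; nra.
  lra.
have nu0 : 0 < nu by lra.
pose s := (Num.sqrt nu)^-1.
have s2 : s ^+ 2 = nu^-1 by rewrite /s exprVn sqr_sqrtr // ltW.
pose y := s%:C *: u.
have uy : unit_sphere y by apply/unit_sphereE; rewrite vsqnormZ sqrmod_real s2 mulVf ?gt_eqF.
have fu : fA A u - z * nu%:C = t%:C * (d + t%:C * (w0 - z)).
  rewrite -vnorm2E vnorm2_cdot fA_sesq /u /d !sesqDl !sesqDr !sesqZl !sesqZr.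
  rewrite !cdotDl !cdotDr !cdotZl !cdotZr conj_real_complex -!fA_sesq f1 f0 !cdot_unit //.
  ring.
have yz : fA A y - z = t%:C * (d + t%:C * (w0 - z)) * (nu^-1)%:C.
  rewrite fA_sesq sesqZl sesqZr conj_real_complex mulrA -rmorphM -expr2 s2 -fu -fA_sesq.
  by rewrite mulrBl -mulrA -rmorphM mulfV ?gt_eqF // mulr1 mulrC.
exists (fA A y); split; first by exists y.
  by rewrite -subr_eq0 yz !mulf_neq0 // fmorph_eq0 ?invr_eq0 gt_eqF.
rewrite yz !sqrmodM !sqrmod_real.
have hD : sqrmod (d + t%:C * (w0 - z)) <= 2 * sqrmod d + 2 * sqrmod (w0 - z).
  apply: le_trans (sqrmodD_le _ _) _; rewrite sqrmodM sqrmod_real lerD2l ler_pM2l //.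
  by rewrite -[leRHS]mul1r ler_wpM2r ?sqrmod_ge0 //; nra.
have hnu : nu^-1 ^+ 2 <= 16.
  have : nu^-1 <= 4 by rewrite invf_ple ?posrE //; lra.
  have : 0 <= nu^-1 by rewrite invr_ge0 ltW.
  rewrite expr2; nra.
have ht : t ^+ 2 <= t / 2 by rewrite expr2; nra.
have -> : 8 * t * (2 * sqrmod d + 2 * sqrmod (w0 - z)) =
          t / 2 * (2 * sqrmod d + 2 * sqrmod (w0 - z)) * 16 by field.
apply: ler_pM => //; first by rewrite mulr_ge0 ?sqr_ge0 ?sqrmod_ge0.
  exact: sqr_ge0.
by apply: ler_pM; rewrite ?sqr_ge0 ?sqrmod_ge0.
Qed.

Lemma numrange_points_near (z w0 : C) : numrange A z -> numrange A w0 -> w0 != z ->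
  forall del : R, 0 < del -> exists p, [/\ numrange A p, p != z & sqrmod (p - z) < del].
Proof.
move=> [x1 u1 f1] [x0 u0 f0] w0z del del0.
pose d := sesq A x1 x0 + sesq A x0 x1 - z * (cdot x1 x0 + cdot x0 x1).
pose M := 2 * sqrmod d + 2 * sqrmod (w0 - z).
have M0 : 0 <= M by rewrite addr_ge0 // mulr_ge0 // sqrmod_ge0.
pose tau := Num.min (1/2) (del / (32 * (M + 1))).
have tau0 : 0 < tau by rewrite lt_min; apply/andP; split; [lra | apply: divr_gt0 => //; nra].
have tau1 : tau <= 1/2 by rewrite ge_min lexx.
have tau2 : tau * (32 * (M + 1)) <= del.
  by rewrite -ler_pdivlMr ?ge_min ?lexx ?orbT //; nra.
have small t : 0 < t -> t <= tau -> d + t%:C * (w0 - z) != 0 ->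
    exists p, [/\ numrange A p, p != z & sqrmod (p - z) < del].
  move=> t0 ttau dt; have [p [Fp pz pd]] :=
    numrange_perturb u1 f1 u0 f0 t0 (le_trans ttau tau1) dt.
  exists p; split => //; apply: le_lt_trans pd _; rewrite -/d -/M.
  have : t * (32 * (M + 1)) <= del by apply: le_trans tau2; rewrite ler_pM2r //; nra.
  nra.
(* [t |-> d + t (w0 - z)] vanishes at most once, so [tau] or [tau / 2] will do. *)
have [dtau|] := eqVneq (d + tau%:C * (w0 - z)) 0; last exact: small.
have tau20 : 0 < tau / 2 by lra.
apply: (small (tau / 2)) => //; first lra.
apply: contraTneq w0z => dtau2.
have : (tau / 2)%:C * (w0 - z) = 0.
  have -> : (tau / 2)%:C * (w0 - z) =
      (d + tau%:C * (w0 - z)) - (d + (tau / 2)%:C * (w0 - z)).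
    have -> : tau%:C = (tau / 2)%:C + (tau / 2)%:C by rewrite -rmorphD; congr (_%:C); field.
    ring.
  by rewrite dtau dtau2 subrr.
by move/eqP; rewrite mulf_eq0 fmorph_eq0 subr_eq0 gt_eqF //= negbK.
Qed.

(* For [c = 0] the segment [[p, q]], for [c = 1] a parabolic arc; the two meet only at [p] and [q]. *)
Definition arc (p q : C) (c s : R) : C := p + (q - p) * (s +i* (c * s * (1 - s))).

Lemma arc0 p q c : arc p q c 0 = p.
Proof.
case: p q => [p1 p2] [q1 q2]; apply/eqP; rewrite /arc eq_complex /=.
by apply/andP; split; apply/eqP; ring.
Qed.

Lemma arc1 p q c : arc p q c 1 = q.
Proof.
case: p q => [p1 p2] [q1 q2]; apply/eqP; rewrite /arc eq_complex /=.
by apply/andP; split; apply/eqP; ring.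
Qed.

Lemma arcB p q c s s' : arc p q c s - arc p q c s' =
  (q - p) * ((s - s') +i* (c * (s - s') * (1 - s - s'))).
Proof.
case: p q => [p1 p2] [q1 q2]; apply/eqP; rewrite /arc eq_complex /=.
by apply/andP; split; apply/eqP; ring.
Qed.

Lemma sqrmod_arcB_le p q c s s' : 0 <= c <= 1 -> 0 <= s <= 1 -> 0 <= s' <= 1 ->
  sqrmod (arc p q c s - arc p q c s') <= 2 * sqrmod (q - p) * (s - s') ^+ 2.
Proof.
move=> /andP[c0 c1] /andP[s0 s1] /andP[s'0 s'1].
rewrite arcB sqrmodM [leRHS]mulrAC [leRHS]mulrC; apply: ler_wpM2l; first exact: sqrmod_ge0.
rewrite /sqrmod /=.
have -> : (c * (s - s') * (1 - s - s')) ^+ 2 = (s - s') ^+ 2 * (c * (1 - s - s')) ^+ 2.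
  by rewrite -exprMn; congr (_ ^+ 2); ring.
have : (c * (1 - s - s')) ^+ 2 <= 1.
  have : -1 <= c * (1 - s - s') <= 1 by apply/andP; split; nra.
  by move=> /andP[h1 h2]; rewrite expr2; nra.
by have := sqr_ge0 (s - s'); nra.
Qed.

Lemma arc_uniform_continuous p q c : 0 <= c <= 1 -> forall e : R, 0 < e ->
  exists2 eta : R, 0 < eta & forall s s', 0 <= s <= 1 -> 0 <= s' <= 1 ->
    `|s - s'| <= eta -> sqrmod (arc p q c s - arc p q c s') < e.
Proof.
move=> c01 e e0; pose K := 2 * sqrmod (q - p).
have K0 : 0 <= K by rewrite mulr_ge0 ?sqrmod_ge0.
exists (Num.min 1 (e / (2 * K + 1))) => [|s s' s01 s'01].
  by rewrite lt_min ltr01 divr_gt0 //; lra.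
rewrite le_min ler_pdivlMr; last lra.
move=> /andP[ss'1 ss'e]; apply: le_lt_trans (sqrmod_arcB_le p q c01 s01 s'01) _.
rewrite -/K -real_normK ?num_real // expr2 mulrA.
have := ler_wpM2l (mulr_ge0 K0 (normr_ge0 (s - s'))) ss'1.
by have := normr_ge0 (s - s'); lra.
Qed.

(* The supremum of the parameters of [arc] that land in the closed set [F(A)]. *)
Lemma arc_boundary_point p q c : 0 <= c <= 1 -> numrange A p -> ~ numrange A q ->
  exists2 s, 0 <= s <= 1 & nr_boundary A (arc p q c s).
Proof.
move=> c01 Fp Fq.
pose S := [set s : R | 0 <= s <= 1 /\ numrange A (arc p q c s)]%classic.
have S0 : S 0 by split; [rewrite lexx ler01 | rewrite arc0].
have ub1 : ubound S 1 by move=> s [/andP[_]].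
have supS : has_sup S by split; [exists 0 | exists 1].
pose sig := sup S.
have sig0 : 0 <= sig := sup_upper_bound supS S0.
have sig1 : sig <= 1 := ge_sup (ex_intro _ _ S0) ub1.
have Fsig : numrange A (arc p q c sig).
  apply: numrange_closed => e e0.
  have [eta eta0 near] := arc_uniform_continuous p q c01 e0.
  have [s Ss sig_s] := sup_adherent eta0 supS.
  have s_sig : s <= sig := sup_upper_bound supS Ss.
  have [/andP[s0 s1] Fs] := Ss.
  exists (arc p q c s) => //; apply: near; rewrite ?s0 ?s1 ?sig0 ?sig1 //.
  by rewrite -/sig in sig_s; rewrite ler_norml; apply/andP; split; lra.
have sig1' : sig < 1.
  by rewrite lt_neqAle sig1 andbT; apply/eqP => sig_eq; apply: Fq; rewrite -(arc1 p q c) -sig_eq.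
exists sig; rewrite ?sig0 ?sig1 //; apply/nr_boundaryE => e e0; split.
  by exists (arc p q c sig); rewrite // subrr sqrmod0.
have [eta eta0 near] := arc_uniform_continuous p q c01 e0.
pose s' := Num.min 1 (sig + eta).
have s'1 : s' <= 1 by rewrite ge_min lexx.
have sig_s' : sig < s' by rewrite lt_min sig1' /=; lra.
exists (arc p q c s').
  move=> Fs'; have Ss' : S s' by split; rewrite // s'1 andbT; lra.
  by have := sup_upper_bound supS Ss'; rewrite leNgt sig_s'.
apply: near; rewrite ?sig0 ?sig1 ?s'1 ?andbT //; first lra.
have : s' <= sig + eta by rewrite ge_min lexx orbT.
by rewrite ler_norml; lra.
Qed.

Lemma arc_avoid p q z : p != z -> q != z -> q != p ->
  exists2 c : R, 0 <= c <= 1 & forall s, arc p q c s != z.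
Proof.
move=> pz qz; rewrite -subr_eq0 => qp.
have [hit0|] := pselect (exists s, arc p q 0 s = z); last first.
  by move=> miss0; exists 0 => [|s]; rewrite ?lexx ?ler01 //; apply/eqP => ?; apply: miss0; exists s.
exists 1 => [|s]; first by rewrite lexx ler01.
apply/eqP => hit1; have [s0 hit0'] := hit0.
have : arc p q 0 s0 = arc p q 1 s by rewrite hit0' hit1.
rewrite /arc => /addrI /(mulfI qp) /eqP.
rewrite eq_complex /= mul0r mul0r mul1r => /andP[_ /eqP /esym /eqP].
rewrite mulf_eq0 subr_eq0 => /orP[/eqP s0' | /eqP s1'].
  by move: pz; rewrite -hit1 s0' arc0 eqxx.
by move: qz; rewrite -hit1 -s1' arc1 eqxx.
Qed.

Lemma boundary_points_near (z w0 : C) : nr_boundary A z -> nr_boundary A w0 -> w0 != z ->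
  forall del : R, 0 < del ->
  exists2 w, nr_boundary A w /\ w != z & `|w - z| < del%:C.
Proof.
move=> bz bw0 w0z del del0.
have eps0 : 0 < del ^+ 2 / 18 by rewrite divr_gt0 ?exprn_gt0.
have [p [Fp pz pnear]] := numrange_points_near (nr_boundary_numrange bz)
  (nr_boundary_numrange bw0) w0z eps0.
have [_ [q Fq qnear]] := (nr_boundaryE z).1 bz _ eps0.
have qp : q != p by apply/eqP => qp; apply: Fq; rewrite qp.
have qz : q != z by apply/eqP => qz; apply: Fq; rewrite qz; apply: nr_boundary_numrange.
have [c c01 avoid] := arc_avoid pz qz qp.
have [s s01 bs] := arc_boundary_point c01 Fp Fq.
exists (arc p q c s); first by split; last exact: avoid.
have qp_le : sqrmod (q - p) <= 2 * sqrmod (q - z) + 2 * sqrmod (p - z).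
  by rewrite -(sqrmodN (p - z)) opprB -[q - p](subrKA z); apply: sqrmodD_le.
have arc_le : sqrmod (arc p q c s - p) <= 2 * sqrmod (q - p).
  have zero01 : 0 <= (0 : R) <= 1 by rewrite lexx ler01.
  have := sqrmod_arcB_le p q c01 s01 zero01; rewrite arc0 subr0 => /le_trans; apply.
  rewrite -[leRHS]mulr1; apply: ler_wpM2l; first by rewrite mulr_ge0 ?sqrmod_ge0.
  by move: s01 => /andP[s0 s1]; rewrite expr2; nra.
rewrite normc_ltR // -(subrKA p); apply: le_lt_trans (sqrmodD_le _ _) _.
by have := sqrmod_ge0 (p - z); lra.
Qed.

End Boundary.

Section Preimages.
Variables (R : realType) (n : nat) (A : 'M[R[i]]_n).
Local Notation C := R[i].
Local Open Scope complex_scope.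
Implicit Types x y : 'cV[C]_n.

Lemma multiply_generated_noncollinear (z : C) x1 :
  unit_sphere x1 -> fA A x1 = z -> multiply_generated A z ->
  exists x2, [/\ unit_sphere x2, fA A x2 = z & forall c : C, x2 != c *: x1].
Proof.
move=> u1 f1 mg; apply: contrapT => coll; apply: mg; exists x1.
  exact: unit_sphere_neq0.
move=> x ux fx; apply: contrapT => ncol; apply: coll; exists x; split => // c.
by apply/eqP => xc; apply: ncol; exists c.
Qed.

Lemma unit_preimages_unimodular (w : C) y1 y2 : ~ multiply_generated A w ->
  unit_sphere y1 -> fA A y1 = w -> unit_sphere y2 -> fA A y2 = w ->
  exists2 g : C, sqrmod g = 1 & y2 = g *: y1.
Proof.
move=> /contrapT[v _ line] u1 f1 u2 f2.
have [c1 y1E] := line _ u1 f1; have [c2 y2E] := line _ u2 f2.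
move: u1 u2; rewrite y1E y2E => /unit_sphereE + /unit_sphereE.
rewrite !vsqnormZ => n1 n2.
have c10 : c1 != 0.
  by apply: contraPneq n1 => ->; rewrite sqrmod0 mul0r => /eqP; rewrite eq_sym oner_eq0.
exists (c2 / c1); last by rewrite scalerA divfK.
apply: (mulIf (_ : sqrmod c1 * vsqnorm v != 0)); first by rewrite n1 oner_eq0.
by rewrite mul1r mulrA -sqrmodM divfK // n1 n2.
Qed.

Lemma vsqnorm_sub_rotated_le x1 x2 y1 (g : C) : sqrmod g = 1 ->
  vsqnorm (x2 - g *: x1) <= 2 * vsqnorm (g *: y1 - x2) + 2 * vsqnorm (y1 - x1).
Proof.
move=> g1; have -> : x2 - g *: x1 = - (g *: y1 - x2) + g *: (y1 - x1).
  by rewrite scalerBr opprB addrA subrK.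
by have := vsqnormD_le (- (g *: y1 - x2)) (g *: (y1 - x1)); rewrite vsqnormN vsqnormZ g1 mul1r.
Qed.

End Preimages.

Unset Implicit Arguments.

Theorem theorem2 (R : realType) (n : nat) (A : 'M[R[i]]_n) (z : R[i]) :
  nr_boundary A z -> isolated_mg A z -> fully_round A z ->
  ~ strongly_continuous_at A z.
Proof.
move=> bz [_ [mg [e e0 iso]]] [_ [_ [w0 bw0 w0z]]] cont.
have [x1 u1 f1] := nr_boundary_numrange bz.
have [x2 [u2 f2 ncol]] := multiply_generated_noncollinear u1 f1 mg.
have [D D0 far] := sqdist_line_gt0 u1 ncol.
have D4 : 0 < D / 4 by rewrite divr_gt0.
have [d1 d10 near1] := cont x1 u1 f1 _ D4.
have [d2 d20 near2] := cont x2 u2 f2 _ D4.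
have dmin : 0 < Num.min d1 (Num.min d2 e) by rewrite !lt_min d10 d20 e0.
have [w [bw wz] wnear] := boundary_points_near bz bw0 w0z dmin.
have [wz1 wz2 wze] :
    [/\ `|w - z| < (d1%:C)%C, `|w - z| < (d2%:C)%C & `|w - z| < (e%:C)%C].
  by split; apply: lt_le_trans wnear _; rewrite lecR !ge_min lexx ?orbT.
have Fw := nr_boundary_numrange bw.
have [y1 [v1 y1x1] fy1] := near1 w Fw wz1.
have [y2 [v2 y2x2] fy2] := near2 w Fw wz2.
have not_mg := iso w bw wz wze.
have [g g1 y2E] := unit_preimages_unimodular not_mg v1 fy1 v2 fy2.
have := le_trans (far g) (vsqnorm_sub_rotated_le x1 x2 y1 g1).
rewrite -y2E; move: y1x1 y2x2; rewrite !vnorm2E !ltcR; lra.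
Qed.
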